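(* For $n=0,1,2,\ldots$ let $R_n=\sum_{k=0}^n\binom{n}{k}\binom{n+k}{k}\frac{1}{2k-1}$. Then the sequence $\{\sqrt[n]{R_n}\}_{n=1}^\infty$ is strictly increasing, and $\lim_{n\to\infty}\sqrt[n]{R_n}=3+2\sqrt{2}$. *)

From Stdlib Require Import Reals.
From Coquelicot Require Import Coquelicot.
Open Scope R_scope.

(* R_n = sum_{k=0}^n C(n,k) C(n+k,k) / (2k-1).  Note sum_f_R0 f n sums k = 0..n. *)
Definition Rseq (n : nat) : R :=
  sum_f_R0 (fun k => Binomial.C n k * Binomial.C (n + k) k / (2 * INR k - 1)) n.

(* n-th root of R_n, as R_n^(1/n) (R_n > 0 for n >= 1). *)
Definition rootRseq (n : nat) : R := Rpower (Rseq n) (/ INR n).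

(* Let D_n = sum_k C(n,k) C(n+k,k) be the central Delannoy numbers, which satisfy
   (n+2) D_{n+2} = 3(2n+3) D_{n+1} - (n+1) D_n.  Comparing R_{n+1} with R_n term by
   term gives (2n+1) R_{n+1} = (2n+3) R_n + D_n + D_{n+1}, and eliminating D yields a
   third-order recurrence for R_n, i.e. a second-order rational recurrence for the
   ratios r_n = R_{n+1}/R_n.  An induction from n = 3 shows that r_n increases,
   with increments at most 100/((n+1)(n+2)), so r_n converges, and its limit L > 1 is a
   fixed point: L^3 - 7L^2 + 7L - 1 = (L-1)(L^2-6L+1) = 0, i.e. L = 3 + 2 sqrt 2.
   Monotonicity of R_n^(1/n) amounts to R_n < r_n^n, and the limit of R_n^(1/n) follows
   from that of r_n by Cesaro's theorem applied to ln r_n. *)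

From Stdlib Require Import Reals Lra Lia.
From Coquelicot Require Import Coquelicot.
Open Scope R_scope.

Definition delannoy_term (n k : nat) : R := Binomial.C n k * Binomial.C (n + k) k.

Definition Delannoy (n : nat) : R := sum_f_R0 (delannoy_term n) n.

Lemma delannoy_term_fact n k : (k <= n)%nat ->
  delannoy_term n k =
  INR (Factorial.fact (n + k)) / (INR (Factorial.fact k) ^ 2 * INR (Factorial.fact (n - k))).
Proof.
  intros Hk. unfold delannoy_term, Binomial.C.
  replace (n + k - k)%nat with n by lia.
  pose proof (INR_fact_neq_0 n). pose proof (INR_fact_neq_0 k).
  pose proof (INR_fact_neq_0 (n - k)).
  field; auto.
Qed.

Lemma delannoy_term_0 n : delannoy_term n 0 = 1.
Proof.
  rewrite delannoy_term_fact by lia. rewrite Nat.add_0_r, Nat.sub_0_r.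
  simpl. field. apply INR_fact_neq_0.
Qed.

Lemma delannoy_term_succ_l n k : (k <= n)%nat ->
  (INR n + 1 - INR k) * delannoy_term (S n) k = (INR n + 1 + INR k) * delannoy_term n k.
Proof.
  intros Hk. rewrite !delannoy_term_fact by lia.
  replace (S n - k)%nat with (S (n - k)) by lia.
  replace (S n + k)%nat with (S (n + k)) by lia.
  rewrite !fact_simpl, !mult_INR, !S_INR, minus_INR, plus_INR by lia.
  pose proof (INR_fact_neq_0 (n + k)). pose proof (INR_fact_neq_0 k).
  pose proof (INR_fact_neq_0 (n - k)).
  assert (INR n - INR k + 1 <> 0) by (apply le_INR in Hk; lra).
  field; auto.
Qed.

Lemma delannoy_term_succ_r n k : (S k <= n)%nat ->
  (INR k + 1) ^ 2 * delannoy_term n (S k)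
  = (INR n - INR k) * (INR n + INR k + 1) * delannoy_term n k.
Proof.
  intros Hk. rewrite !delannoy_term_fact by lia.
  replace (n - k)%nat with (S (n - S k)) by lia.
  replace (n + S k)%nat with (S (n + k)) by lia.
  rewrite !fact_simpl, !mult_INR, !S_INR, minus_INR, plus_INR, S_INR by lia.
  pose proof (INR_fact_neq_0 (n + k)). pose proof (INR_fact_neq_0 k).
  pose proof (INR_fact_neq_0 (n - S k)).
  assert (INR k + 1 <> 0) by (pose proof (pos_INR k); lra).
  assert (INR n - (INR k + 1) + 1 <> 0) by (apply le_INR in Hk; rewrite S_INR in Hk; lra).
  field; auto.
Qed.

Lemma eq_div_of_mul_eq p q x y : p <> 0 -> p * x = q * y -> x = q / p * y.
Proof. intros Hp H. apply (Rmult_eq_reg_l p); [rewrite H; field|]; auto. Qed.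

Lemma sum_f_R0_lin3 (f g h : nat -> R) (a b c : R) N :
  sum_f_R0 (fun k => a * f k - b * g k + c * h k) N
  = a * sum_f_R0 f N - b * sum_f_R0 g N + c * sum_f_R0 h N.
Proof. induction N as [|N IH]; simpl; [|rewrite IH]; ring. Qed.

Definition delannoy_rec_summand (n k : nat) : R :=
  (INR n + 2) * delannoy_term (S (S n)) k - 3 * (2 * INR n + 3) * delannoy_term (S n) k
  + (INR n + 1) * delannoy_term n k.

(* The certificate produced by Zeilberger's algorithm. *)
Lemma delannoy_rec_summand_telescope n j : (S j <= n)%nat ->
  delannoy_rec_summand n (S j)
  = - (4 * INR n + 6) * (delannoy_term (S n) (S j) - delannoy_term (S n) j).
Proof.
  intros Hj. unfold delannoy_rec_summand.
  pose proof (delannoy_term_succ_l n (S j) Hj) as e1.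
  pose proof (delannoy_term_succ_l (S n) (S j) ltac:(lia)) as e2.
  pose proof (delannoy_term_succ_r (S n) j ltac:(lia)) as e3.
  apply le_INR in Hj. rewrite !S_INR in *. pose proof (pos_INR j).
  apply eq_div_of_mul_eq in e1; [|lra]. apply eq_div_of_mul_eq in e2; [|lra].
  symmetry in e3. apply eq_div_of_mul_eq in e3;
    [|apply Rmult_integral_contrapositive; split; lra].
  rewrite e3, e2, e1. field. repeat split; lra.
Qed.

Lemma delannoy_rec_partial_sum n m : (m <= n)%nat ->
  sum_f_R0 (delannoy_rec_summand n) m = - (4 * INR n + 6) * delannoy_term (S n) m.
Proof.
  induction m as [|m IH]; intros Hm.
  - simpl. unfold delannoy_rec_summand. rewrite !delannoy_term_0. ring.
  - simpl. rewrite IH, delannoy_rec_summand_telescope by lia. ring.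
Qed.

Lemma delannoy_rec_boundary n :
  (INR n + 2) * (delannoy_term (S (S n)) (S n) + delannoy_term (S (S n)) (S (S n)))
  - 3 * (2 * INR n + 3) * delannoy_term (S n) (S n)
  = (4 * INR n + 6) * delannoy_term (S n) n.
Proof.
  pose proof (delannoy_term_succ_r (S n) n ltac:(lia)) as e1.
  pose proof (delannoy_term_succ_l (S n) (S n) ltac:(lia)) as e2.
  pose proof (delannoy_term_succ_r (S (S n)) (S n) ltac:(lia)) as e3.
  rewrite !S_INR in *. pose proof (pos_INR n).
  replace (INR n + 1 + 1 - (INR n + 1)) with 1 in e2 by ring. rewrite Rmult_1_l in e2.
  apply eq_div_of_mul_eq in e1; [|apply pow_nonzero; lra].
  apply eq_div_of_mul_eq in e3; [|apply pow_nonzero; lra].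
  rewrite e3, e2, e1. field. lra.
Qed.

Lemma Delannoy_rec n :
  (INR n + 2) * Delannoy (S (S n)) - 3 * (2 * INR n + 3) * Delannoy (S n)
  + (INR n + 1) * Delannoy n = 0.
Proof.
  pose proof (delannoy_rec_partial_sum n n (le_n n)) as Hsum.
  unfold delannoy_rec_summand in Hsum. rewrite sum_f_R0_lin3 in Hsum.
  pose proof (delannoy_rec_boundary n) as Hbd.
  unfold Delannoy. rewrite !tech5. lra.
Qed.

Lemma two_INR_sub_1_neq_0 k : 2 * INR k - 1 <> 0.
Proof.
  destruct k as [|k]; [simpl; lra|].
  rewrite S_INR. pose proof (pos_INR k). lra.
Qed.

Lemma Rseq_Delannoy_rec n :
  (2 * INR n + 1) * Rseq (S n) = (2 * INR n + 3) * Rseq n + Delannoy n + Delannoy (S n).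
Proof.
  unfold Rseq, Delannoy.
  change (fun k => Binomial.C ?m k * Binomial.C (?m + k) k / (2 * INR k - 1))
    with (fun k => delannoy_term m k / (2 * INR k - 1)).
  assert (Hpartial : forall m, (m <= n)%nat ->
     (2 * INR n + 1) * sum_f_R0 (fun k => delannoy_term (S n) k / (2 * INR k - 1)) m
     = (2 * INR n + 3) * sum_f_R0 (fun k => delannoy_term n k / (2 * INR k - 1)) m
       + sum_f_R0 (delannoy_term n) m + sum_f_R0 (delannoy_term (S n)) m).
  { induction m as [|m IH]; intros Hm.
    - simpl. rewrite !delannoy_term_0. field.
    - rewrite !tech5, Rmult_plus_distr_l, IH by lia.
      pose proof (delannoy_term_succ_l n (S m) Hm) as e.
      pose proof (two_INR_sub_1_neq_0 (S m)).
      apply le_INR in Hm. rewrite S_INR in *.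
      apply eq_div_of_mul_eq in e; [|lra]. rewrite e. field. lra. }
  rewrite tech5, Rmult_plus_distr_l, Hpartial, tech5 by lia.
  pose proof (two_INR_sub_1_neq_0 (S n)). rewrite S_INR in *.
  field. lra.
Qed.

Lemma Rseq_rec n :
  (INR n + 3) * Rseq (S (S (S n))) =
  (7 * INR n + 13) * Rseq (S (S n)) - (7 * INR n + 15) * Rseq (S n) + (INR n + 1) * Rseq n.
Proof.
  pose proof (Rseq_Delannoy_rec n) as h0. pose proof (Rseq_Delannoy_rec (S n)) as h1.
  pose proof (Rseq_Delannoy_rec (S (S n))) as h2.
  pose proof (Delannoy_rec n) as d0. pose proof (Delannoy_rec (S n)) as d1.
  rewrite !S_INR in *. pose proof (pos_INR n).
  set (x := INR n) in *.
  set (D2 := Delannoy (S (S n))) in *. set (D3 := Delannoy (S (S (S n)))) in *.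
  set (R1 := Rseq (S n)) in *. set (R2 := Rseq (S (S n))) in *.
  set (R3 := Rseq (S (S (S n)))) in *.
  assert (eD2 : D2 = (3 * (2 * x + 3) * Delannoy (S n) - (x + 1) * Delannoy n) / (x + 2))
    by (apply Rmult_eq_reg_l with (x + 2); [field_simplify|]; lra).
  assert (eD3 : D3 = (3 * (2 * x + 5) * D2 - (x + 2) * Delannoy (S n)) / (x + 3))
    by (apply Rmult_eq_reg_l with (x + 3); [field_simplify|]; lra).
  assert (eR1 : R1 = ((2 * x + 3) * Rseq n + Delannoy n + Delannoy (S n)) / (2 * x + 1))
    by (apply Rmult_eq_reg_l with (2 * x + 1); [field_simplify|]; lra).
  assert (eR2 : R2 = ((2 * x + 5) * R1 + Delannoy (S n) + D2) / (2 * x + 3))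
    by (apply Rmult_eq_reg_l with (2 * x + 3); [field_simplify|]; lra).
  assert (eR3 : R3 = ((2 * x + 7) * R2 + D2 + D3) / (2 * x + 5))
    by (apply Rmult_eq_reg_l with (2 * x + 5); [field_simplify|]; lra).
  rewrite eR3, eR2, eR1, eD3, eD2. field. lra.
Qed.

Lemma Rseq_0 : Rseq 0 = -1.
Proof. unfold Rseq, Binomial.C. simpl. field. Qed.

Lemma Rseq_1 : Rseq 1 = 1.
Proof. unfold Rseq, Binomial.C. simpl. field. Qed.

Lemma Rseq_2 : Rseq 2 = 7.
Proof. unfold Rseq, Binomial.C. simpl. field. Qed.

Lemma Rseq_rec_eval n a b c :
  Rseq n = a -> Rseq (S n) = b -> Rseq (S (S n)) = c ->
  Rseq (S (S (S n)))
  = ((7 * INR n + 13) * c - (7 * INR n + 15) * b + (INR n + 1) * a) / (INR n + 3).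
Proof.
  intros <- <- <-. pose proof (Rseq_rec n). pose proof (pos_INR n).
  apply Rmult_eq_reg_l with (INR n + 3); [field_simplify|]; lra.
Qed.

Lemma Rseq_3 : Rseq 3 = 25.
Proof. rewrite (Rseq_rec_eval 0 _ _ _ Rseq_0 Rseq_1 Rseq_2). simpl. field. Qed.

Lemma Rseq_4 : Rseq 4 = 87.
Proof. rewrite (Rseq_rec_eval 1 _ _ _ Rseq_1 Rseq_2 Rseq_3). simpl. field. Qed.

Lemma Rseq_5 : Rseq 5 = 329.
Proof. rewrite (Rseq_rec_eval 2 _ _ _ Rseq_2 Rseq_3 Rseq_4). simpl. field. Qed.

Lemma Rseq_6 : Rseq 6 = 1359.
Proof. rewrite (Rseq_rec_eval 3 _ _ _ Rseq_3 Rseq_4 Rseq_5). simpl. field. Qed.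

Definition ratio (n : nat) : R := Rseq (S n) / Rseq n.

Definition ratio_step (x a b : R) : R :=
  ((7 * x + 13) - (7 * x + 15) / a + (x + 1) / (a * b)) / (x + 3).

Lemma ratio_rec n : Rseq n <> 0 -> Rseq (S n) <> 0 -> Rseq (S (S n)) <> 0 ->
  ratio (S (S n)) = ratio_step (INR n) (ratio (S n)) (ratio n).
Proof.
  intros h0 h1 h2. unfold ratio, ratio_step. pose proof (pos_INR n).
  rewrite (Rseq_rec_eval n _ _ _ eq_refl eq_refl eq_refl). field. lra.
Qed.

Lemma inv_bounds_of_ge y : 17/5 <= y -> 0 < / y <= 5/17.
Proof.
  intros Hy. split; [apply Rinv_0_lt_compat; lra|].
  replace (5/17) with (/ (17/5)) by field. apply Rinv_le_contravar; lra.
Qed.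

Section RatioIncrement.

Variables x a b c : R.
Hypothesis Hx : 4 <= x.
Hypothesis Hc : 17/5 <= c.
Hypothesis Hcb : c < b.
Hypothesis Hba : b < a.
Hypothesis Ha : a = ratio_step (x - 1) b c.

(* The new increment is a positive multiple of a - b, minus a multiple of b - c, plus a
   positive term of order 1/x^2 that dominates the second one. *)
Lemma ratio_step_sub_decomp :
  ratio_step x a b - a =
  (a - b) * (/ a * / b) * ((7 * x + 15 - (x + 1) * / b) / (x + 3))
  - (x + 1) / (x + 3) * ((b - c) * (/ b * / b * / c))
  + (8 - 6 * / b + 2 * (/ b * / c)) / ((x + 2) * (x + 3)).
Proof.
  rewrite Ha at 2. unfold ratio_step.
  replace (x - 1 + 13) with (x + 12) by ring. field. repeat split; lra.
Qed.

Lemma ratio_increment_pos : b - c <= 100 / (x * (x + 1)) -> 0 < ratio_step x a b - a.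
Proof.
  intros Hbc. rewrite ratio_step_sub_decomp.
  destruct (inv_bounds_of_ge a) as [ia ia']; [lra|].
  destruct (inv_bounds_of_ge b) as [ib ib']; [lra|].
  destruct (inv_bounds_of_ge c) as [ic ic']; [lra|].
  assert (Hmain : 0 < (a - b) * (/ a * / b) * ((7 * x + 15 - (x + 1) * / b) / (x + 3))).
  { apply Rmult_lt_0_compat; [apply Rmult_lt_0_compat; nra | apply Rdiv_lt_0_compat; nra]. }
  assert (Hvvw : / b * / b * / c <= 125/4913).
  { assert (/ b * / b <= 25/289) by nra. nra. }
  assert (Hcorr : (x + 1) / (x + 3) * ((b - c) * (/ b * / b * / c))
               <= (x + 1) / (x + 3) * (100 / (x * (x + 1)) * (125/4913))).
  { apply Rmult_le_compat_l; [apply Rlt_le, Rdiv_lt_0_compat; lra|].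
    apply Rmult_le_compat; try nra. }
  assert (Hlow : 100 * (125/4913) / (x * (x + 3)) < (8 - 6 * (5/17)) / ((x + 2) * (x + 3))).
  { apply Rmult_lt_reg_r with (x * (x + 2) * (x + 3)); [nra|].
    unfold Rdiv. field_simplify; nra. }
  assert (Hlast : (8 - 6 * (5/17)) / ((x + 2) * (x + 3))
               <= (8 - 6 * / b + 2 * (/ b * / c)) / ((x + 2) * (x + 3))).
  { apply Rmult_le_compat_r; [apply Rlt_le, Rinv_0_lt_compat; nra | nra]. }
  replace ((x + 1) / (x + 3) * (100 / (x * (x + 1)) * (125 / 4913)))
    with (100 * (125/4913) / (x * (x + 3))) in Hcorr by (field; lra).
  lra.
Qed.

Lemma ratio_increment_le :
  a - b <= 100 / ((x + 1) * (x + 2)) -> ratio_step x a b - a <= 100 / ((x + 2) * (x + 3)).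
Proof.
  intros Hab. rewrite ratio_step_sub_decomp.
  destruct (inv_bounds_of_ge a) as [ia ia']; [lra|].
  destruct (inv_bounds_of_ge b) as [ib ib']; [lra|].
  destruct (inv_bounds_of_ge c) as [ic ic']; [lra|].
  assert (Hq : 0 <= (7 * x + 15 - (x + 1) * / b) / (x + 3) <= 7).
  { split; [apply Rlt_le, Rdiv_lt_0_compat; nra|].
    apply Rle_div_l; nra. }
  assert (Hmain : (a - b) * (/ a * / b) * ((7 * x + 15 - (x + 1) * / b) / (x + 3))
                  <= 100 / ((x + 1) * (x + 2)) * (7 * (25/289))).
  { assert (0 < / a * / b <= 25/289) by (split; nra).
    rewrite Rmult_assoc. apply Rmult_le_compat; [lra | nra | lra |].
    replace (7 * (25/289)) with (25/289 * 7) by ring.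
    apply Rmult_le_compat; lra. }
  assert (Hcorr : 0 <= (x + 1) / (x + 3) * ((b - c) * (/ b * / b * / c))).
  { apply Rmult_le_pos; [apply Rlt_le, Rdiv_lt_0_compat; lra|].
    apply Rmult_le_pos; [lra|]. repeat apply Rmult_le_pos; lra. }
  assert (Hlast : (8 - 6 * / b + 2 * (/ b * / c)) / ((x + 2) * (x + 3))
                  <= (8 + 2 * (25/289)) / ((x + 2) * (x + 3))).
  { apply Rmult_le_compat_r; [apply Rlt_le, Rinv_0_lt_compat; nra | nra]. }
  assert (Hsum : 100 / ((x + 1) * (x + 2)) * (7 * (25/289))
                 + (8 + 2 * (25/289)) / ((x + 2) * (x + 3)) <= 100 / ((x + 2) * (x + 3))).
  { apply Rmult_le_reg_r with ((x + 1) * (x + 2) * (x + 3)); [nra|].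
    unfold Rdiv. field_simplify; nra. }
  lra.
Qed.

End RatioIncrement.

Lemma ratio_step_increment p a b c : (3 <= p)%nat -> 17/5 <= c -> c < b < a ->
  a = ratio_step (INR p) b c ->
  b - c <= 100 / ((INR p + 1) * (INR p + 2)) -> a - b <= 100 / ((INR p + 2) * (INR p + 3)) ->
  0 < ratio_step (INR (S p)) a b - a <= 100 / ((INR p + 3) * (INR p + 4)).
Proof.
  intros Hp Hc [Hcb Hba] Ha Hbc Hab. rewrite S_INR.
  assert (Hx : INR 3 <= INR p) by (apply le_INR; exact Hp). simpl in Hx.
  replace (INR p) with (INR p + 1 - 1) in Ha by ring.
  replace (INR p + 2) with (INR p + 1 + 1) in Hbc, Hab by ring.
  replace (INR p + 3) with (INR p + 1 + 2) in Hab |- * by ring.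
  replace (INR p + 4) with (INR p + 1 + 3) by ring.
  split; [apply ratio_increment_pos with c | apply ratio_increment_le with c]; auto; lra.
Qed.

(* The increment bounds telescope, 100/((p+3)(p+4)) = 100/(p+3) - 100/(p+4),
   so the last conjunct propagates and bounds every later ratio by 21. *)
Definition ratio_invariant (p : nat) : Prop :=
  (forall k, (1 <= k <= p + 3)%nat -> 0 < Rseq k) /\
  17/5 <= ratio p /\
  0 < ratio (S p) - ratio p <= 100 / ((INR p + 1) * (INR p + 2)) /\
  0 < ratio (S (S p)) - ratio (S p) <= 100 / ((INR p + 2) * (INR p + 3)) /\
  ratio (S (S p)) + 100 / (INR p + 3) <= 21.

Lemma ratio_invariant_3 : ratio_invariant 3.
Proof.
  unfold ratio_invariant, ratio. rewrite Rseq_3, Rseq_4, Rseq_5, Rseq_6.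
  replace (INR 3) with 3 by (simpl; ring).
  split.
  - intros k Hk. destruct k as [|[|[|[|[|[|[|k]]]]]]]; try lia;
      [rewrite Rseq_1 | rewrite Rseq_2 | rewrite Rseq_3 | rewrite Rseq_4
      | rewrite Rseq_5 | rewrite Rseq_6]; lra.
  - repeat split; unfold Rdiv; lra.
Qed.

Lemma ratio_invariant_succ p : (3 <= p)%nat -> ratio_invariant p -> ratio_invariant (S p).
Proof.
  intros Hp [Hpos [Hc [[H1 H2] [[H3 H4] H5]]]].
  assert (Hrec : forall m, (1 <= m /\ m + 2 <= p + 3)%nat ->
             ratio (S (S m)) = ratio_step (INR m) (ratio (S m)) (ratio m)).
  { intros m Hm. apply ratio_rec; apply Rgt_not_eq, Hpos; lia. }
  pose proof (ratio_step_increment p (ratio (S (S p))) (ratio (S p)) (ratio p) Hp Hc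
                ltac:(lra) (Hrec p ltac:(lia)) H2 H4) as Hinc.
  rewrite <- (Hrec (S p) ltac:(lia)) in Hinc.
  assert (Hx : 0 <= INR p) by apply pos_INR.
  unfold ratio_invariant. rewrite !S_INR.
  replace (INR p + 1 + 1) with (INR p + 2) by ring.
  replace (INR p + 1 + 2) with (INR p + 3) by ring.
  replace (INR p + 1 + 3) with (INR p + 4) by ring.
  split; [|split; [lra|split; [split; lra|split; [lra|]]]].
  - intros k Hk. destruct (Nat.eq_dec k (S p + 3)) as [->|Hne]; [|apply Hpos; lia].
    replace (S p + 3)%nat with (S (S (S (S p)))) by lia.
    replace (p + 3)%nat with (S (S (S p))) in Hpos by lia.
    assert (Hq : 0 < Rseq (S (S (S p)))) by (apply Hpos; lia).
    replace (Rseq (S (S (S (S p))))) with (ratio (S (S (S p))) * Rseq (S (S (S p))))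
      by (unfold ratio; field; lra).
    nra.
  - assert (100 / ((INR p + 3) * (INR p + 4)) + 100 / (INR p + 4) = 100 / (INR p + 3))
      by (field; lra).
    lra.
Qed.

Lemma ratio_invariant_ge p : (3 <= p)%nat -> ratio_invariant p.
Proof.
  induction 1; [apply ratio_invariant_3 | apply ratio_invariant_succ; auto].
Qed.

Lemma Rseq_pos k : (1 <= k)%nat -> 0 < Rseq k.
Proof.
  intros Hk. destruct (ratio_invariant_ge (Nat.max 3 k) ltac:(lia)) as [Hpos _].
  apply Hpos; lia.
Qed.

Lemma Rseq_succ n : (1 <= n)%nat -> Rseq (S n) = Rseq n * ratio n.
Proof. intros Hn. pose proof (Rseq_pos n Hn). unfold ratio. field. lra. Qed.

Lemma ratio_lt_succ p : (3 <= p)%nat -> ratio p < ratio (S p).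
Proof. intros Hp. destruct (ratio_invariant_ge p Hp) as [_ [_ [H _]]]. lra. Qed.

Lemma ratio_ge p : (3 <= p)%nat -> 17/5 <= ratio p.
Proof. intros Hp. apply (ratio_invariant_ge p Hp). Qed.

Lemma ratio_le_21 p : (5 <= p)%nat -> ratio p <= 21.
Proof.
  intros Hp. destruct (ratio_invariant_ge (p - 2) ltac:(lia)) as [_ [_ [_ [_ H]]]].
  replace (S (S (p - 2))) with p in H by lia.
  assert (0 < 100 / (INR (p - 2) + 3)).
  { pose proof (pos_INR (p - 2)). apply Rdiv_lt_0_compat; lra. }
  lra.
Qed.

Lemma Rseq_le_ratio_pow n : (3 <= n)%nat -> Rseq n <= 25 * ratio n ^ (n - 3).
Proof.
  induction 1 as [|m Hm IH].
  - rewrite Rseq_3. simpl. lra.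
  - rewrite Rseq_succ by lia. replace (S m - 3)%nat with (S (m - 3)) by lia. simpl.
    pose proof (ratio_lt_succ m Hm). pose proof (ratio_ge m Hm).
    pose proof (pow_incr (ratio m) (ratio (S m)) (m - 3) ltac:(lra)).
    pose proof (pow_lt (ratio m) (m - 3) ltac:(lra)).
    pose proof (Rseq_pos m ltac:(lia)).
    nra.
Qed.

Lemma Rseq_lt_ratio_pow n : (1 <= n)%nat -> Rseq n < ratio n ^ n.
Proof.
  intros Hn. destruct n as [|[|[|n]]]; try lia.
  - unfold ratio. rewrite Rseq_1, Rseq_2. simpl. lra.
  - unfold ratio. rewrite Rseq_2, Rseq_3. simpl. lra.
  - set (m := S (S (S n))).
    pose proof (Rseq_le_ratio_pow m ltac:(lia)) as Hle.
    pose proof (ratio_ge m ltac:(lia)) as Hge.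
    replace (m - 3)%nat with n in Hle by lia.
    replace (ratio m ^ m) with (ratio m ^ 3 * ratio m ^ n) by (unfold m; simpl; ring).
    assert (25 < ratio m ^ 3) by (simpl; nra).
    pose proof (pow_lt (ratio m) n ltac:(lra)).
    nra.
Qed.

Lemma Rpower_inv_lt_succ (a b : R) (n : nat) : (1 <= n)%nat -> 0 < a -> 0 < b ->
  a < (b / a) ^ n -> Rpower a (/ INR n) < Rpower b (/ INR (S n)).
Proof.
  intros Hn Ha Hb Hlt. unfold Rpower. apply exp_increasing.
  apply ln_increasing in Hlt; [|exact Ha].
  rewrite ln_pow, ln_div in Hlt by (try apply Rdiv_lt_0_compat; assumption).
  rewrite S_INR.
  assert (Hx : 1 <= INR n) by (apply (le_INR 1); exact Hn).
  apply Rmult_lt_reg_l with (INR n * (INR n + 1)); [nra|].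
  replace (INR n * (INR n + 1) * (/ INR n * ln a)) with ((INR n + 1) * ln a) by (field; lra).
  replace (INR n * (INR n + 1) * (/ (INR n + 1) * ln b)) with (INR n * ln b) by (field; lra).
  lra.
Qed.

Lemma ratio_cvg : exists L : R, is_lim_seq ratio L /\ 17/5 <= L.
Proof.
  set (u := fun p => ratio (p + 5)).
  assert (Hincr : forall p, u p <= u (S p)).
  { intros p. unfold u. replace (S p + 5)%nat with (S (p + 5)) by lia.
    apply Rlt_le, ratio_lt_succ. lia. }
  assert (Hbd : forall p, u p <= 21) by (intros p; apply ratio_le_21; lia).
  pose proof (Lim_seq_correct' u (ex_finite_lim_seq_incr u 21 Hincr Hbd)) as Hu.
  exists (real (Lim_seq u)). split.
  - apply (is_lim_seq_incr_n ratio 5). exact Hu.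
  - pose proof (is_lim_seq_incr_compare u _ Hu Hincr 0) as H0.
    change (u 0%nat) with (ratio 5) in H0.
    pose proof (ratio_ge 5 ltac:(lia)). lra.
Qed.

Lemma ratio_step_split x a b : x + 3 <> 0 ->
  ratio_step x a b = (7 - 7 / a + 1 / (a * b)) + (-8 + 6 / a - 2 / (a * b)) * / (x + 3).
Proof.
  intros Hx. unfold ratio_step, Rdiv. rewrite !Rinv_mult.
  set (ia := / a). set (ib := / b). field. exact Hx.
Qed.

Lemma is_lim_seq_inv_INR_add_3 : is_lim_seq (fun m => / (INR m + 3)) 0.
Proof.
  assert (H : is_lim_seq (fun m => INR m + 3) p_infty).
  { apply is_lim_seq_ext with (fun m => INR (m + 3)).
    - intros m. rewrite plus_INR. simpl. ring.
    - apply (is_lim_seq_incr_n INR 3), is_lim_seq_INR. }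
  apply is_lim_seq_inv in H; [exact H | discriminate].
Qed.

Lemma is_lim_seq_ratio_step (u v : nat -> R) (A B : R) :
  is_lim_seq u A -> is_lim_seq v B -> A <> 0 -> B <> 0 ->
  is_lim_seq (fun m => ratio_step (INR m) (u m) (v m)) (7 - 7 / A + 1 / (A * B)).
Proof.
  intros Hu Hv HA HB.
  assert (HAB : A * B <> 0) by (apply Rmult_integral_contrapositive; auto).
  apply is_lim_seq_ext with (fun m => (7 - 7 / u m + 1 / (u m * v m))
                                      + (-8 + 6 / u m - 2 / (u m * v m)) * / (INR m + 3)).
  { intros m. symmetry. apply ratio_step_split. pose proof (pos_INR m). lra. }
  replace (7 - 7 / A + 1 / (A * B))
    with ((7 - 7 / A + 1 / (A * B)) + (-8 + 6 / A - 2 / (A * B)) * 0) by ring.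
  assert (H1 : forall c, is_lim_seq (fun m => c / u m) (c / A)).
  { intros c. apply is_lim_seq_div'; [apply is_lim_seq_const | exact Hu | exact HA]. }
  assert (H2 : forall c, is_lim_seq (fun m => c / (u m * v m)) (c / (A * B))).
  { intros c. apply is_lim_seq_div'; [apply is_lim_seq_const | | exact HAB].
    apply is_lim_seq_mult'; assumption. }
  apply is_lim_seq_plus'.
  - apply is_lim_seq_plus'; [|apply H2].
    apply is_lim_seq_minus'; [apply is_lim_seq_const | apply H1].
  - apply is_lim_seq_mult'; [|apply is_lim_seq_inv_INR_add_3].
    apply is_lim_seq_minus'; [|apply H2].
    apply is_lim_seq_plus'; [apply is_lim_seq_const | apply H1].
Qed.

Lemma cubic_root_gt_1 L : 1 < L -> L ^ 3 - 7 * L ^ 2 + 7 * L - 1 = 0 -> L = 3 + 2 * sqrt 2.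
Proof.
  intros HL E. pose proof (sqrt_sqrt 2 ltac:(lra)). pose proof (sqrt_pos 2).
  assert (F : (L - 1) * ((L - (3 + 2 * sqrt 2)) * (L - (3 - 2 * sqrt 2))) = 0) by nra.
  apply Rmult_integral in F as [F|F]; [lra|].
  apply Rmult_integral in F as [F|F]; [lra|nra].
Qed.

Lemma ratio_limit L : 17/5 <= L -> is_lim_seq ratio L -> L = 3 + 2 * sqrt 2.
Proof.
  intros HL Hr.
  pose proof (proj1 (is_lim_seq_incr_1 _ _) Hr) as Hr1.
  pose proof (proj1 (is_lim_seq_incr_1 _ _) Hr1) as Hr2. simpl in Hr2.
  assert (Hstep : is_lim_seq (fun m => ratio (S (S m))) (7 - 7 / L + 1 / (L * L))).
  { apply is_lim_seq_ext_loc with (fun m => ratio_step (INR m) (ratio (S m)) (ratio m)).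
    - exists 1%nat. intros m Hm. symmetry.
      apply ratio_rec; apply Rgt_not_eq, Rseq_pos; lia.
    - apply is_lim_seq_ratio_step; auto; lra. }
  pose proof (is_lim_seq_unique _ _ Hr2) as E1. rewrite (is_lim_seq_unique _ _ Hstep) in E1.
  injection E1 as E1.
  apply cubic_root_gt_1; [lra|].
  replace (L ^ 3 - 7 * L ^ 2 + 7 * L - 1) with (L * L * (L - (7 - 7 / L + 1 / (L * L))))
    by (field; lra).
  rewrite E1. ring.
Qed.

Lemma is_lim_seq_root_of_ratio (u : nat -> R) (L : R) :
  (forall n, (1 <= n)%nat -> 0 < u n) -> 0 < L ->
  is_lim_seq (fun n => u (S n) / u n) L ->
  is_lim_seq (fun n => Rpower (u n) (/ INR n)) L.
Proof.
  intros Hpos HL Hr.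
  set (A := fun k => match k with O => ln (u 1%nat) | S _ => ln (u (S k) / u k) end).
  assert (HsumA : forall n, sum_f_R0 A n = ln (u (S n))).
  { induction n as [|n IH]; [reflexivity|].
    rewrite tech5, IH. simpl A. rewrite ln_div by (apply Hpos; lia). ring. }
  assert (HA : is_lim_seq A (ln L)).
  { apply is_lim_seq_ext_loc with (fun k => ln (u (S k) / u k)).
    - exists 1%nat. intros [|k] Hk; [lia|reflexivity].
    - apply is_lim_seq_continuous; [|exact Hr].
      apply derivable_continuous_pt. exists (/ L). apply derivable_pt_lim_ln, HL. }
  apply is_lim_seq_Reals, Cesaro_1, is_lim_seq_Reals in HA.
  apply (is_lim_seq_continuous exp) in HA; [|apply derivable_continuous_pt, derivable_pt_exp].
  rewrite exp_ln in HA by exact HL.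
  apply is_lim_seq_ext_loc with (2 := HA).
  exists 1%nat. intros [|n] Hn; [lia|]. simpl Init.Nat.pred. rewrite HsumA.
  unfold Rpower, Rdiv. f_equal. ring.
Qed.

Theorem corollary4p3 :
  (forall n : nat, (1 <= n)%nat -> rootRseq n < rootRseq (S n)) /\
  is_lim_seq rootRseq (3 + 2 * sqrt 2).
Proof.
  split.
  - intros n Hn. apply Rpower_inv_lt_succ; [exact Hn | apply Rseq_pos; lia
      | apply Rseq_pos; lia | apply Rseq_lt_ratio_pow, Hn].
  - destruct ratio_cvg as [L [HL HLge]].
    rewrite <- (ratio_limit L HLge HL).
    apply is_lim_seq_root_of_ratio; [exact Rseq_pos | lra | exact HL].
Qed.
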